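(* (i) No strongly hyperhyperimmune set has upper density $1$. (ii) For every real $\epsilon>0$ there is a strongly hyperhyperimmune set with upper density at least $1-\epsilon$.
   Context: For $S\subseteq\omega$ and $n>0$, $\rho_n(S)=|S\cap[0,n)|/n$ and the upper density is $\limsup_n\rho_n(S)$. $W_e$ denotes the $e$th c.e. set. An infinite set $A\subseteq\omega$ is strongly hyperhyperimmune if there is no computable function $f$ such that the sets $W_{f(0)},W_{f(1)},\dots$ are pairwise disjoint and all intersect $A$. *)

From Stdlib Require Import Reals Arith List Cantor.
From Coquelicot Require Import Coquelicot.
Import ListNotations.
Local Open Scope nat_scope.

(* Model of computation: Minsky register machines with a standard     *)
(* Goedel numbering (via Cantor pairing).                             *)

Inductive instr : Type :=
| Inc (r : nat)
| JzDec (r j : nat).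

Definition program := list instr.

Definition decode_instr (h : nat) : instr :=
  let (a, b) := Cantor.of_nat h in
  match a with
  | 0 => Inc b
  | S _ => let (r, j) := Cantor.of_nat b in JzDec r j
  end.

Fixpoint decode_list (fuel n : nat) : program :=
  match fuel with
  | 0 => []
  | S f => match n with
           | 0 => []
           | S m => let (h, t) := Cantor.of_nat m in decode_instr h :: decode_list f t
           end
  end.

(* The e-th program (fuel e suffices since Cantor components are <= the code). *)
Definition prog_of (e : nat) : program := decode_list e e.

Record config := mkConfig { pc : nat; regs : nat -> nat }.

Definition upd (g : nat -> nat) (r v : nat) : nat -> nat :=
  fun k => if Nat.eqb k r then v else g k.

Definition step (p : program) (c : config) : config :=
  match nth_error p (pc c) with
  | None => c
  | Some (Inc r) => mkConfig (S (pc c)) (upd (regs c) r (S (regs c r)))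
  | Some (JzDec r j) =>
      match regs c r with
      | 0 => mkConfig j (regs c)
      | S v => mkConfig (S (pc c)) (upd (regs c) r v)
      end
  end.

Fixpoint run (p : program) (n : nat) (c : config) : config :=
  match n with 0 => c | S k => run p k (step p c) end.

Definition init (x : nat) : config := mkConfig 0 (fun r => if Nat.eqb r 0 then x else 0).

Definition halted (p : program) (c : config) : Prop := length p <= pc c.

Definition halts (e x : nat) : Prop :=
  exists n, halted (prog_of e) (run (prog_of e) n (init x)).

Definition computes (e x y : nat) : Prop :=
  exists n, halted (prog_of e) (run (prog_of e) n (init x)) /\
            regs (run (prog_of e) n (init x)) 0 = y.

Definition W (e : nat) (x : nat) : Prop := halts e x.

Definition computable (f : nat -> nat) : Prop :=
  exists e, forall x, computes e x (f x).

Definition infinite_set (A : nat -> bool) : Prop :=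
  forall m, exists n, m <= n /\ A n = true.

Definition strongly_hhi (A : nat -> bool) : Prop :=
  infinite_set A /\
  ~ exists f : nat -> nat,
      computable f /\
      (forall i j x, i <> j -> W (f i) x -> W (f j) x -> False) /\
      (forall i, exists x, W (f i) x /\ A x = true).

Fixpoint count_below (X : nat -> bool) (n : nat) : nat :=
  match n with
  | 0 => 0
  | S k => count_below X k + (if X k then 1 else 0)
  end.

Local Open Scope R_scope.
Definition rho (X : nat -> bool) (n : nat) : R := INR (count_below X n) / INR n.

Definition upper_density (X : nat -> bool) : Rbar :=
  LimSup_seq (fun n => rho X (S n)).

(* (i) The positive integers of 2-adic valuation exactly n form pairwise disjoint sets
   V_n, and V_n is the halting set of a register machine whose code is computable from
   n.  V_n contains one integer in every block of 2^(n+1), so a set missing V_n has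
   upper density at most 1 - 2^-(n+1); hence a set of upper density 1 meets every V_n.
   (ii) Choose m with 1/m <= eps and build the complement B of A in stages, B keeping
   density at most 1/m along an increasing sequence of lengths.  At stage e, if the
   e-th partial computable function indexes a disjoint family of c.e. sets, a whole
   member of that family is put into B while the density allowance grows only by
   1/(m 2^(e+1)).  Then A misses a member of every such family, and A has upper
   density at least 1 - 1/m. *)

From Stdlib Require Import Reals Lra Lia Arith List Classical ClassicalEpsilon FunctionalExtensionality.
From Coquelicot Require Import Coquelicot.
Import ListNotations.
Open Scope bool_scope. Open Scope nat_scope.

Lemma count_below_le X n : count_below X n <= n.
Proof. induction n; simpl; [lia | destruct (X n); lia]. Qed.

Lemma count_below_ext X Y n :
  (forall x, x < n -> X x = Y x) -> count_below X n = count_below Y n.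
Proof.
  induction n; intros H; simpl; auto.
  rewrite IHn, H by (intros; try apply H; lia). reflexivity.
Qed.

Lemma count_below_mono X n n' : n <= n' -> count_below X n <= count_below X n'.
Proof. induction 1; simpl; lia. Qed.

Lemma count_below_orb X Y n :
  count_below (fun x => X x || Y x) n <= count_below X n + count_below Y n.
Proof. induction n; simpl; auto. destruct (X n), (Y n); simpl; lia. Qed.

Lemma count_below_negb X n : count_below X n + count_below (fun x => negb (X x)) n = n.
Proof. induction n; simpl; auto. destruct (X n); simpl; lia. Qed.

Lemma count_below_gt x X n : x < n -> X x = true -> count_below X x < count_below X n.
Proof.
  intros Hx HX. apply Nat.lt_le_trans with (count_below X (S x)).
  - simpl. rewrite HX. lia.
  - apply count_below_mono. lia.
Qed.

Lemma count_below_bounded X L n :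
  (forall x, L <= x -> x < n -> X x = false) -> count_below X n <= L.
Proof.
  induction n; intros H; simpl; [lia|].
  destruct (le_lt_dec L n).
  - rewrite H by lia. rewrite Nat.add_0_r. apply IHn. intros; apply H; lia.
  - pose proof (count_below_le X n). destruct (X n); lia.
Qed.

Lemma infinite_set_of_half_density A :
  (forall K, exists n, K <= n /\ n <= 2 * count_below A n) -> infinite_set A.
Proof.
  intros H L. apply NNPP; intros HL.
  destruct (H (2 * L + 1)) as [n [Hn1 Hn2]].
  enough (count_below A n <= L) by lia.
  apply count_below_bounded. intros x Hx _.
  destruct (A x) eqn:E; auto. exfalso; eauto.
Qed.

Definition disjoint_family (S : nat -> nat -> bool) : Prop :=
  forall i j x, i <> j -> S i x = true -> S j x = true -> False.

Fixpoint sum_below (f : nat -> nat) (K : nat) : nat :=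
  match K with 0 => 0 | S k => sum_below f k + f k end.

Lemma sum_below_le f g K :
  (forall i, i < K -> f i <= g i) -> sum_below f K <= sum_below g K.
Proof. induction K; intros H; simpl; auto. specialize (IHK ltac:(auto)). specialize (H K). lia. Qed.

Lemma sum_below_add f g K :
  sum_below (fun i => f i + g i) K = sum_below f K + sum_below g K.
Proof. induction K; simpl; lia. Qed.

Lemma sum_below_mull a f K : sum_below (fun i => a * f i) K = a * sum_below f K.
Proof. induction K; simpl; lia. Qed.

Lemma sum_below_const c K : sum_below (fun _ => c) K = K * c.
Proof. induction K; simpl; lia. Qed.

Lemma sum_below_eq0 f K : (forall i, i < K -> f i = 0) -> sum_below f K = 0.
Proof. induction K; intros H; simpl; auto. rewrite IHK, H; auto. Qed.

Lemma disjoint_family_sum_count S K n :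
  disjoint_family S -> sum_below (fun i => count_below (S i) n) K <= n.
Proof.
  intros HD. induction n; simpl.
  - rewrite sum_below_eq0; auto.
  - rewrite sum_below_add.
    enough (sum_below (fun i => if S i n then 1 else 0) K <= 1) by lia.
    clear IHn. induction K; simpl; [lia|].
    destruct (S K n) eqn:E; [|lia].
    rewrite sum_below_eq0; [lia|]. intros i Hi.
    destruct (S i n) eqn:E'; auto. exfalso. apply (HD i K n); auto. lia.
Qed.

Definition io_density_le (B : nat -> bool) (c : R) : Prop :=
  forall L, exists n, L <= n /\ (INR (count_below B n) <= c * INR n)%R.

Lemma uniform_eventually (P : nat -> Prop) (Q : nat -> nat -> Prop) K :
  (forall i, i < K -> P i \/ exists L, forall n, L <= n -> Q i n) ->
  exists L, forall i, i < K -> P i \/ forall n, L <= n -> Q i n.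
Proof.
  induction K; intros H; [exists 0; lia|].
  destruct IHK as [L HL]; [intros; apply H; lia|].
  destruct (H K ltac:(lia)) as [HP | [L' HL']].
  - exists L. intros i Hi. destruct (Nat.eq_dec i K); [subst; auto | apply HL; lia].
  - exists (Nat.max L L'). intros i Hi. destruct (Nat.eq_dec i K) as [->|].
    + right; intros; apply HL'; lia.
    + destruct (HL i ltac:(lia)) as [|HQ]; auto. right; intros; apply HQ; lia.
Qed.

(* Of [N + M + 1] disjoint sets at most [N] meet [[0, N)], and at most [M] can
   each hold more than a [1/M] fraction of every long enough initial segment. *)
Lemma io_density_le_union B c S N M :
  0 < M -> io_density_le B c -> disjoint_family S ->
  exists i, (forall x, x < N -> S i x = false) /\
            io_density_le (fun x => B x || S i x) (c + / INR M).
Proof.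
  intros HM HB HD. apply NNPP; intros Hnone.
  assert (Hbad : forall i, i < N + M + 1 ->
     (exists x, x < N /\ S i x = true) \/ exists L, forall n, L <= n ->
       (INR (count_below (fun x => B x || S i x) n) > (c + / INR M) * INR n)%R).
  { intros i _. destruct (classic (exists x, x < N /\ S i x = true)) as [|Hfree]; [left; auto|right].
    apply NNPP; intros Hio. apply Hnone. exists i. split.
    - intros x Hx. destruct (S i x) eqn:E; auto. exfalso; eauto.
    - intros L. apply NNPP; intros HL. apply Hio. exists L. intros n Hn.
      apply Rnot_le_gt. intros Hle. eauto. }
  destruct (uniform_eventually _ _ _ Hbad) as [L HL].
  destruct (HB (L + N + 1)) as [n [Hn HBn]].
  assert (Hsets : forall i, i < N + M + 1 ->
            n <= M * count_below (S i) n + n * count_below (S i) N).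
  { intros i Hi. destruct (HL i Hi) as [[x [Hx HSx]] | Hdense].
    - pose proof (count_below_gt x (S i) N Hx HSx). nia.
    - specialize (Hdense n ltac:(lia)).
      pose proof (le_INR _ _ (count_below_orb B (S i) n)) as Horb. rewrite plus_INR in Horb.
      assert (HMr : (0 < INR M)%R) by (apply lt_0_INR; lia).
      assert (Hlt : (INR n < INR M * INR (count_below (S i) n))%R).
      { assert (Hgt : (/ INR M * INR n < INR (count_below (S i) n))%R) by lra.
        apply (Rmult_lt_compat_l (INR M)) in Hgt; auto.
        rewrite <- Rmult_assoc, Rinv_r in Hgt; lra. }
      rewrite <- mult_INR in Hlt. apply INR_lt in Hlt. lia. }
  apply sum_below_le in Hsets.
  rewrite sum_below_const, sum_below_add, sum_below_mull, sum_below_mull in Hsets.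
  pose proof (disjoint_family_sum_count S (N + M + 1) n HD).
  pose proof (disjoint_family_sum_count S (N + M + 1) N HD).
  nia.
Qed.

(** * A sparse set containing a member of every disjoint family *)

Section Construction.

Variable F : nat -> nat -> nat -> bool.
Variable m : nat.
Hypothesis m_pos : 0 < m.

Definition budget k : R := (/ INR m - / (INR m * 2 ^ k))%R.

Lemma budget_S k : budget (S k) = (budget k + / INR (m * 2 ^ S k))%R.
Proof.
  unfold budget. rewrite mult_INR, pow_INR. change (INR 2) with 2%R.
  assert (0 < INR m)%R by (apply lt_0_INR; lia).
  assert (0 < 2 ^ k)%R by (apply pow_lt; lra).
  simpl. field. lra.
Qed.

Lemma budget_le k : (budget k <= / INR m)%R.
Proof.
  unfold budget. assert (0 < INR m)%R by (apply lt_0_INR; lia).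
  assert (0 < 2 ^ k)%R by (apply pow_lt; lra).
  assert (0 < / (INR m * 2 ^ k))%R by (apply Rinv_0_lt_compat; nra). lra.
Qed.

Lemma budget_mono k : (budget k <= budget (S k))%R.
Proof.
  rewrite budget_S. enough (0 < / INR (m * 2 ^ S k))%R by lra.
  apply Rinv_0_lt_compat, lt_0_INR. pose proof (Nat.pow_nonzero 2 (S k)). nia.
Qed.

(* Stage [k] has decided [blocked] below [frozen]; [blocked] is the complement of the set built. *)
Record approx := Approx { blocked : nat -> bool; frozen : nat }.

Definition approx_ok k (a : approx) : Prop :=
  io_density_le (blocked a) (budget k) /\
  (INR (count_below (blocked a) (frozen a)) <= budget k * INR (frozen a))%R /\
  k < frozen a.

Definition extends k (a a' : approx) : Prop :=
  approx_ok (S k) a' /\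
  (forall x, x < frozen a -> blocked a' x = blocked a x) /\
  (forall x, blocked a x = true -> blocked a' x = true) /\
  frozen a <= frozen a' /\
  (disjoint_family (F k) -> exists i, forall x, F k i x = true -> blocked a' x = true).

Lemma extends_exists k a : approx_ok k a -> exists a', extends k a a'.
Proof.
  destruct a as [B N]. intros [Hio [Hcount Hk]]; simpl in *.
  destruct (classic (disjoint_family (F k))) as [HD | HD].
  - assert (HM : 0 < m * 2 ^ S k) by (pose proof (Nat.pow_nonzero 2 (S k)); nia).
    destruct (io_density_le_union B (budget k) (F k) N _ HM Hio HD) as [i [Hfree Hio']].
    rewrite <- budget_S in Hio'.
    destruct (Hio' (N + k + 2)) as [n [Hn Hcount']].
    exists (Approx (fun x => B x || F k i x) n).
    repeat split; simpl; auto; try lia.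
    + intros x Hx. rewrite Hfree; auto. apply Bool.orb_false_r.
    + intros x ->. reflexivity.
    + intros _. exists i. intros x ->. apply Bool.orb_true_r.
  - assert (Hio' : io_density_le B (budget (S k))).
    { intros L. destruct (Hio L) as [n [Hn Hle]]. exists n; split; auto.
      pose proof (budget_mono k). pose proof (pos_INR n). nra. }
    destruct (Hio' (N + k + 2)) as [n [Hn Hcount']].
    exists (Approx B n). repeat split; simpl; auto; try lia. contradiction.
Qed.

Lemma extends_total k a : exists a', approx_ok k a -> extends k a a'.
Proof.
  destruct (classic (approx_ok k a)) as [Ha | Ha].
  - destruct (extends_exists k a Ha) as [a' Ha']. eauto.
  - exists a. contradiction.
Qed.

Definition next k a : approx := proj1_sig (constructive_indefinite_description _ (extends_total k a)).

Fixpoint stage k : approx :=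
  match k with 0 => Approx (fun _ => false) 1 | S k => next k (stage k) end.

Lemma next_extends k a : approx_ok k a -> extends k a (next k a).
Proof. exact (proj2_sig (constructive_indefinite_description _ (extends_total k a))). Qed.

Lemma stage_ok k : approx_ok k (stage k).
Proof.
  induction k as [|k IH]; simpl.
  - assert (H0 : forall n, count_below (fun _ => false) n = 0) by (induction n; simpl; lia).
    unfold approx_ok, budget. simpl. rewrite Rmult_1_r, Rminus_diag.
    repeat split; try lra; auto.
    intros L. exists L. split; auto. rewrite H0. simpl. lra.
  - apply (next_extends k _ IH).
Qed.

Lemma stage_extends k : extends k (stage k) (stage (S k)).
Proof. apply next_extends, stage_ok. Qed.

Lemma frozen_gt k : k < frozen (stage k).
Proof. apply (stage_ok k). Qed.

Lemma frozen_mono j k : j <= k -> frozen (stage j) <= frozen (stage k).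
Proof. induction 1 as [|k _ IH]; auto. pose proof (stage_extends k) as (_ & _ & _ & Hle & _). lia. Qed.

Lemma blocked_stable j k x : j <= k -> x < frozen (stage j) ->
  blocked (stage k) x = blocked (stage j) x.
Proof.
  induction 1 as [|k Hjk IH]; intros Hx; auto.
  pose proof (stage_extends k) as (_ & Hagree & _).
  rewrite Hagree, IH; auto. pose proof (frozen_mono _ _ Hjk). lia.
Qed.

Lemma blocked_mono j k x : j <= k -> blocked (stage j) x = true -> blocked (stage k) x = true.
Proof.
  induction 1 as [|k _ IH]; intros Hx; auto.
  apply (stage_extends k); auto.
Qed.

Definition limit x : bool := blocked (stage (S x)) x.

Lemma limit_eq k x : x < frozen (stage k) -> limit x = blocked (stage k) x.
Proof.
  unfold limit. intros Hx. destruct (le_lt_dec (S x) k).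
  - symmetry. apply blocked_stable; auto. pose proof (frozen_gt (S x)). lia.
  - apply blocked_stable; auto. lia.
Qed.

Lemma limit_contains_member k :
  disjoint_family (F k) -> exists i, forall x, F k i x = true -> limit x = true.
Proof.
  intros HD. pose proof (stage_extends k) as (_ & _ & _ & _ & Hmember).
  destruct (Hmember HD) as [i Hi]. exists i. intros x Hx.
  set (K := Nat.max (S x) (S k)).
  rewrite (limit_eq K) by (pose proof (frozen_gt K); lia).
  apply (blocked_mono (S k)); auto. lia.
Qed.

Lemma limit_count k :
  (INR (count_below limit (frozen (stage k))) <= / INR m * INR (frozen (stage k)))%R.
Proof.
  rewrite (count_below_ext limit (blocked (stage k))) by (intros; apply limit_eq; auto).
  pose proof (stage_ok k) as (_ & Hcount & _).
  pose proof (budget_le k). pose proof (pos_INR (frozen (stage k))). nra.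
Qed.

End Construction.

Theorem sparse_set_containing_family_members (F : nat -> nat -> nat -> bool) (m : nat) :
  0 < m ->
  exists B : nat -> bool,
    (forall k, disjoint_family (F k) -> exists i, forall x, F k i x = true -> B x = true) /\
    (forall K, exists n, K <= n /\ (INR (count_below B n) <= / INR m * INR n)%R).
Proof.
  intros Hm. exists (limit F m Hm). split.
  - apply limit_contains_member.
  - intros K. exists (frozen (stage F m Hm K)). split.
    + pose proof (frozen_gt F m Hm K). lia.
    + apply limit_count; auto.
Qed.

(** * Register machines *)

Lemma run_add p a b c : run p (a + b) c = run p b (run p a c).
Proof. revert c; induction a; intros c; simpl; auto. Qed.

Lemma run_halted p n c : halted p c -> run p n c = c.
Proof.
  intros Hh. induction n; simpl; auto.
  enough (step p c = c) by congruence.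
  unfold step. destruct (nth_error p (pc c)) eqn:E; auto.
  apply nth_error_None in Hh. congruence.
Qed.

Lemma run_halted_eq p n n' c :
  halted p (run p n c) -> halted p (run p n' c) -> run p n c = run p n' c.
Proof.
  intros H H'. destruct (le_lt_dec n n') as [Hle | Hlt].
  - replace n' with (n + (n' - n)) by lia. rewrite run_add. symmetry. apply run_halted, H.
  - replace n with (n' + (n - n')) by lia. rewrite run_add. apply run_halted, H'.
Qed.

Lemma computes_functional e x y y' : computes e x y -> computes e x y' -> y = y'.
Proof. intros [n [H E]] [n' [H' E']]. rewrite (run_halted_eq _ _ _ _ H H') in E. congruence. Qed.

Lemma upd_eq g r v : upd g r v r = v.
Proof. unfold upd. rewrite Nat.eqb_refl. auto. Qed.

Lemma upd_neq g r v k : k <> r -> upd g r v k = g k.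
Proof. unfold upd. intros H. apply Nat.eqb_neq in H. rewrite H. auto. Qed.

Lemma upd_same g r : upd g r (g r) = g.
Proof. apply functional_extensionality; intros k. unfold upd. destruct (Nat.eqb_spec k r); subst; auto. Qed.

Lemma upd_upd g r v w : upd (upd g r v) r w = upd g r w.
Proof. apply functional_extensionality; intros k. unfold upd. destruct (Nat.eqb_spec k r); auto. Qed.

Lemma upd_comm g r v r' w : r <> r' -> upd (upd g r v) r' w = upd (upd g r' w) r v.
Proof.
  intros H. apply functional_extensionality; intros k. unfold upd.
  destruct (Nat.eqb_spec k r), (Nat.eqb_spec k r'); subst; auto. congruence.
Qed.

Lemma step_Inc p k g r : nth_error p k = Some (Inc r) ->
  step p (mkConfig k g) = mkConfig (S k) (upd g r (S (g r))).
Proof. intros H. unfold step. simpl. rewrite H. reflexivity. Qed.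

Lemma step_JzDec_0 p k g r j : nth_error p k = Some (JzDec r j) -> g r = 0 ->
  step p (mkConfig k g) = mkConfig j g.
Proof. intros H Hr. unfold step. simpl. rewrite H, Hr. reflexivity. Qed.

Lemma step_JzDec_S p k g r j v : nth_error p k = Some (JzDec r j) -> g r = S v ->
  step p (mkConfig k g) = mkConfig (S k) (upd g r v).
Proof. intros H Hr. unfold step. simpl. rewrite H, Hr. reflexivity. Qed.

Definition reaches p c (P : config -> Prop) : Prop := exists k, P (run p k c).

Lemma reaches_now p c (P : config -> Prop) : P c -> reaches p c P.
Proof. intros; exists 0; auto. Qed.

Lemma reaches_step p c P : reaches p (step p c) P -> reaches p c P.
Proof. intros [k H]; exists (S k); auto. Qed.

Lemma reaches_trans p c (P Q : config -> Prop) :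
  reaches p c P -> (forall c', P c' -> reaches p c' Q) -> reaches p c Q.
Proof. intros [k H] H2. destruct (H2 _ H) as [k2 H3]. exists (k + k2). rewrite run_add. auto. Qed.

Definition code_at (p : program) (b : nat) (l : program) : Prop :=
  exists before after, p = before ++ l ++ after /\ length before = b.

Lemma code_at_app p b l1 l2 :
  code_at p b (l1 ++ l2) -> code_at p b l1 /\ code_at p (b + length l1) l2.
Proof.
  intros (before & after & -> & <-). split.
  - exists before, (l2 ++ after). rewrite <- !app_assoc. auto.
  - exists (before ++ l1), after. rewrite length_app, <- !app_assoc. auto.
Qed.

Lemma code_at_cons p b i l : code_at p b (i :: l) -> nth_error p b = Some i /\ code_at p (S b) l.
Proof.
  intros Hcode. destruct (code_at_app p b [i] l Hcode) as [(before & after & -> & <-) Hl].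
  rewrite Nat.add_1_r in Hl. split; auto.
  rewrite nth_error_app2, Nat.sub_diag by lia. reflexivity.
Qed.

Definition family_of_index (e i x : nat) : bool :=
  if excluded_middle_informative (exists y, computes e i y /\ W y x) then true else false.

Lemma family_of_index_spec e f : (forall i, computes e i (f i)) ->
  forall i x, family_of_index e i x = true <-> W (f i) x.
Proof.
  intros Hf i x. unfold family_of_index.
  destruct (excluded_middle_informative _) as [[y [Hy HW]] | Hno]; split; intros H; auto.
  - rewrite (computes_functional _ _ _ _ Hy (Hf i)) in HW. exact HW.
  - discriminate.
  - exfalso. eauto.
Qed.

Lemma LimSup_seq_ge_io (u : nat -> R) (c : R) :
  (forall K, exists n, K <= n /\ (c <= u n)%R) -> Rbar_le (Finite c) (LimSup_seq u).
Proof.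
  intros H. destruct (ex_LimSup_seq u) as [l Hl]. rewrite (is_LimSup_seq_unique _ _ Hl).
  destruct l as [l| |]; simpl in *; auto.
  - apply Rnot_lt_le. intros Hlt.
    assert (Hp : (0 < (c - l) / 2)%R) by lra.
    destruct (Hl (mkposreal _ Hp)) as [_ [N HN]]. simpl in HN.
    destruct (H N) as [n [Hn1 Hn2]]. specialize (HN n Hn1). lra.
  - destruct (Hl c) as [N HN]. destruct (H N) as [n [Hn1 Hn2]]. specialize (HN n Hn1). lra.
Qed.

Lemma exists_inv_INR_le (eps : R) : (0 < eps)%R ->
  exists m, 2 <= m /\ (/ INR m <= eps)%R.
Proof.
  intros Heps. destruct (INR_archimed eps 1 (Rlt_gt _ _ Heps)) as [n Hn].
  exists (n + 2). split; [lia|]. rewrite plus_INR. simpl (INR 2).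
  pose proof (pos_INR n).
  apply (Rmult_le_reg_l (INR n + (1 + 1))); [lra|].
  rewrite Rinv_r by lra. nra.
Qed.

Lemma strongly_hhi_dense (eps : R) : (0 < eps)%R ->
  exists A : nat -> bool, strongly_hhi A /\ Rbar_le (Finite (1 - eps)) (upper_density A).
Proof.
  intros Heps. destruct (exists_inv_INR_le eps Heps) as [m [Hm Hmeps]].
  destruct (sparse_set_containing_family_members family_of_index m ltac:(lia))
    as [B [Hmember Hsparse]].
  set (A x := negb (B x)).
  assert (Hdense : forall K, exists n, K <= n /\ ((1 - eps) * INR n <= INR (count_below A n))%R).
  { intros K. destruct (Hsparse K) as [n [Hn Hcount]]. exists n. split; auto.
    pose proof (f_equal INR (count_below_negb B n)) as Hsum. rewrite plus_INR in Hsum.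
    fold A in Hsum. pose proof (pos_INR n). nra. }
  exists A. split; [split|].
  - apply infinite_set_of_half_density. intros K.
    destruct (Hsparse K) as [n [Hn Hcount]]. exists n. split; auto.
    pose proof (f_equal INR (count_below_negb B n)) as Hsum. rewrite plus_INR in Hsum.
    fold A in Hsum. apply INR_le. rewrite mult_INR. simpl (INR 2).
    assert (/ INR m <= / 2)%R by (apply Rinv_le_contravar; [lra | apply (le_INR 2); lia]).
    pose proof (pos_INR n). nra.
  - intros [f [[e He] [Hdisj Hmeet]]].
    assert (HD : disjoint_family (family_of_index e)).
    { intros i j x Hij Hi Hj. apply (family_of_index_spec e f He) in Hi, Hj. eauto. }
    destruct (Hmember e HD) as [i Hi]. destruct (Hmeet i) as [x [Hx HAx]].
    unfold A in HAx. rewrite Hi in HAx; [discriminate|].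
    apply (family_of_index_spec e f He); auto.
  - apply LimSup_seq_ge_io. intros K.
    destruct (Hdense (S K)) as [[|n] [Hn Hcount]]; [lia|].
    exists n. split; [lia|]. unfold rho.
    assert (0 < INR (S n))%R by (apply lt_0_INR; lia).
    apply (Rmult_le_reg_r (INR (S n))); auto. unfold Rdiv. rewrite Rmult_assoc, Rinv_l; lra.
Qed.

(** * Structured programs *)

(* [SFor r s] runs [s] as many times as [r] holds and leaves [r] at 0; register 9
   is reserved to stay 0, so that [JzDec 9 j] is an unconditional jump. *)
Inductive stmt := SNop | SInc (r : nat) | SSeq (s1 s2 : stmt) | SFor (r : nat) (s : stmt).

Fixpoint stmt_size s : nat :=
  match s with
  | SNop => 0
  | SInc _ => 1
  | SSeq s1 s2 => stmt_size s1 + stmt_size s2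
  | SFor _ s => stmt_size s + 2
  end.

Fixpoint compile s b : program :=
  match s with
  | SNop => []
  | SInc r => [Inc r]
  | SSeq s1 s2 => compile s1 b ++ compile s2 (b + stmt_size s1)
  | SFor r s => JzDec r (b + stmt_size s + 2) :: compile s (b + 1) ++ [JzDec 9 b]
  end.

Fixpoint mentions s k : bool :=
  match s with
  | SNop => false
  | SInc r => Nat.eqb r k
  | SSeq s1 s2 => mentions s1 k || mentions s2 k
  | SFor r s => Nat.eqb r k || mentions s k
  end.

Fixpoint wf_stmt s : bool :=
  match s with
  | SNop => true
  | SInc r => negb (Nat.eqb r 9)
  | SSeq s1 s2 => wf_stmt s1 && wf_stmt s2
  | SFor r s => negb (Nat.eqb r 9) && negb (mentions s r) && wf_stmt s
  end.

Fixpoint exec s (g : nat -> nat) : nat -> nat :=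
  match s with
  | SNop => g
  | SInc r => upd g r (S (g r))
  | SSeq s1 s2 => exec s2 (exec s1 g)
  | SFor r s => upd (Nat.iter (g r) (exec s) g) r 0
  end.

Lemma compile_size s b : length (compile s b) = stmt_size s.
Proof.
  revert b; induction s; intros b; simpl; auto.
  - rewrite length_app, IHs1, IHs2; auto.
  - rewrite length_app, IHs; simpl; lia.
Qed.

Lemma exec_unmentioned s g k : mentions s k = false -> exec s g k = g k.
Proof.
  revert g; induction s; intros g H; simpl in *; auto.
  - apply Nat.eqb_neq in H. rewrite upd_neq; auto.
  - apply Bool.orb_false_iff in H as [H1 H2]. rewrite IHs2, IHs1; auto.
  - apply Bool.orb_false_iff in H as [H1 H2]. apply Nat.eqb_neq in H1.
    rewrite upd_neq by auto. generalize (g r); intros n. induction n; simpl; auto.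
    rewrite IHs; auto.
Qed.

Lemma iter_upd (f : (nat -> nat) -> nat -> nat) g r v n :
  (forall h, f (upd h r v) = upd (f h) r v) ->
  Nat.iter n f (upd g r v) = upd (Nat.iter n f g) r v.
Proof. intros H. induction n; simpl; auto. rewrite IHn, H. auto. Qed.

Lemma exec_upd s g r v : mentions s r = false -> exec s (upd g r v) = upd (exec s g) r v.
Proof.
  revert g; induction s; intros g H; simpl in *; auto.
  - apply Nat.eqb_neq in H. rewrite upd_neq by auto. apply upd_comm; auto.
  - apply Bool.orb_false_iff in H as [H1 H2]. rewrite IHs1, IHs2; auto.
  - apply Bool.orb_false_iff in H as [H1 H2]. apply Nat.eqb_neq in H1.
    rewrite upd_neq, iter_upd by (intros; try apply IHs; auto).
    apply upd_comm; auto.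
Qed.

Lemma wf_stmt_reg9 s : wf_stmt s = true -> mentions s 9 = false.
Proof.
  induction s; simpl; intros H; auto.
  - apply Bool.negb_true_iff in H; auto.
  - apply andb_prop in H as [H1 H2]. rewrite IHs1, IHs2; auto.
  - apply andb_prop in H as [H H3]. apply andb_prop in H as [H _].
    apply Bool.negb_true_iff in H. rewrite H, IHs; auto.
Qed.

Definition compiles_correctly (s : stmt) : Prop :=
  forall p b g, code_at p b (compile s b) -> g 9 = 0 ->
  reaches p (mkConfig b g) (eq (mkConfig (b + stmt_size s) (exec s g))).

Lemma compile_for_correct r s :
  compiles_correctly s -> r <> 9 -> mentions s r = false -> mentions s 9 = false ->
  compiles_correctly (SFor r s).
Proof.
  intros Hs Hr9 Hsr Hs9 p b g Hcode Hg9. simpl in Hcode.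
  apply code_at_cons in Hcode as [Htest Hcode].
  apply code_at_app in Hcode as [Hbody Hback].
  apply code_at_cons in Hback as [Hback _]. rewrite compile_size in Hback.
  rewrite Nat.add_1_r in Hbody. simpl exec.
  remember (g r) as v eqn:Hv. symmetry in Hv. revert g Hv Hg9.
  induction v as [|v IHv]; intros g Hv Hg9.
  - apply reaches_step. rewrite (step_JzDec_0 _ _ _ _ _ Htest Hv).
    assert (Hsame : upd g r 0 = g) by (rewrite <- Hv; apply upd_same).
    apply reaches_now. simpl. rewrite Hsame. f_equal. lia.
  - apply reaches_step. rewrite (step_JzDec_S _ _ _ _ _ _ Htest Hv).
    eapply reaches_trans; [apply Hs; auto; rewrite upd_neq; auto|]. intros c <-.
    set (g' := exec s (upd g r v)).
    assert (Hg'9 : g' 9 = 0) by (unfold g'; rewrite exec_unmentioned, upd_neq; auto).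
    assert (Hg'r : g' r = v) by (unfold g'; rewrite exec_upd, upd_eq; auto).
    apply reaches_step. rewrite (step_JzDec_0 _ _ _ _ _ Hback Hg'9).
    eapply reaches_trans; [apply (IHv g'); auto|]. intros c <-. apply reaches_now.
    f_equal. unfold g'.
    rewrite <- Nat.iter_succ_r, iter_upd by (intros; apply exec_upd; auto).
    symmetry. apply upd_upd.
Qed.

Lemma compile_correct s : wf_stmt s = true -> compiles_correctly s.
Proof.
  induction s; intros Hwf p b g Hcode Hg9; simpl in Hwf, Hcode |- *.
  - apply reaches_now. f_equal. lia.
  - apply code_at_cons in Hcode as [Hinc _].
    apply reaches_step. rewrite (step_Inc _ _ _ _ Hinc). apply reaches_now. f_equal. lia.
  - apply andb_prop in Hwf as [Hwf1 Hwf2]. apply code_at_app in Hcode as [Hcode1 Hcode2].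
    rewrite compile_size in Hcode2.
    eapply reaches_trans; [apply IHs1; auto|]. intros c <-.
    eapply reaches_trans; [apply IHs2; auto|].
    + rewrite exec_unmentioned; auto. apply wf_stmt_reg9; auto.
    + intros c <-. apply reaches_now. f_equal. lia.
  - apply andb_prop in Hwf as [Hwf Hwfs]. apply andb_prop in Hwf as [Hr Hsr].
    apply Bool.negb_true_iff in Hr, Hsr. apply Nat.eqb_neq in Hr.
    apply (compile_for_correct r s); auto. apply wf_stmt_reg9; auto.
Qed.

Definition encode_instr (i : instr) : nat :=
  match i with
  | Inc r => Cantor.to_nat (0, r)
  | JzDec r j => Cantor.to_nat (1, Cantor.to_nat (r, j))
  end.

Fixpoint encode (p : program) : nat :=
  match p with [] => 0 | i :: l => S (Cantor.to_nat (encode_instr i, encode l)) end.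

Lemma decode_encode_instr i : decode_instr (encode_instr i) = i.
Proof. destruct i; unfold decode_instr, encode_instr; rewrite !Cantor.cancel_of_to; auto. Qed.

Lemma decode_list_encode l fuel : encode l <= fuel -> decode_list fuel (encode l) = l.
Proof.
  revert fuel; induction l as [|i l IHl]; intros [|fuel] H; try reflexivity.
  - simpl in H. lia.
  - change (S (Cantor.to_nat (encode_instr i, encode l)) <= S fuel) in H.
    change ((let (h, t) := Cantor.of_nat (Cantor.to_nat (encode_instr i, encode l)) in
             decode_instr h :: decode_list fuel t) = i :: l).
    rewrite Cantor.cancel_of_to, decode_encode_instr, IHl; auto.
    pose proof (Cantor.to_nat_non_decreasing (encode_instr i) (encode l)). lia.
Qed.

Lemma prog_of_encode l : prog_of (encode l) = l.
Proof. apply decode_list_encode. auto. Qed.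

Lemma compile_computes s x :
  wf_stmt s = true -> computes (encode (compile s 0)) x (exec s (regs (init x)) 0).
Proof.
  intros Hwf.
  assert (Hcode : code_at (compile s 0) 0 (compile s 0)).
  { exists [], []. rewrite app_nil_r. auto. }
  destruct (compile_correct s Hwf _ 0 (regs (init x)) Hcode eq_refl) as [k Hk].
  exists k. rewrite prog_of_encode. unfold init in *. simpl in Hk. rewrite <- Hk.
  split; auto. unfold halted. simpl. rewrite compile_size. auto.
Qed.

Lemma exec_SNop g : exec SNop g = g. Proof. reflexivity. Qed.
Lemma exec_SInc r g : exec (SInc r) g = upd g r (S (g r)). Proof. reflexivity. Qed.
Lemma exec_SSeq s1 s2 g : exec (SSeq s1 s2) g = exec s2 (exec s1 g). Proof. reflexivity. Qed.
Lemma exec_SFor r s g : exec (SFor r s) g = upd (Nat.iter (g r) (exec s) g) r 0.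
Proof. reflexivity. Qed.

Ltac exec_unfold :=
  repeat first [rewrite exec_SNop | rewrite exec_SInc | rewrite exec_SSeq | rewrite exec_SFor].

Ltac decide_eqb :=
  repeat match goal with
  | |- context [Nat.eqb ?a ?b] =>
      first [ replace (Nat.eqb a b) with true by (symmetry; apply Nat.eqb_eq; lia)
            | replace (Nat.eqb a b) with false by (symmetry; apply Nat.eqb_neq; lia)
            | destruct (Nat.eqb_spec a b); try subst ]
  end; cbv iota beta.

Ltac use_zero_regs :=
  repeat match goal with H : ?g ?k = 0 |- context [?g ?k] => rewrite H end;
  rewrite ?Nat.add_0_l, ?Nat.add_0_r; try reflexivity; try lia.

Ltac upd_ext := apply functional_extensionality; intro; unfold upd; decide_eqb; try lia; try use_zero_regs.

Ltac upd_side := try lia; unfold upd; decide_eqb; lia.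

Lemma iter_exec_SInc r g k : Nat.iter k (exec (SInc r)) g = upd g r (g r + k).
Proof.
  induction k.
  - simpl. rewrite Nat.add_0_r, upd_same; auto.
  - rewrite Nat.iter_succ, IHk. exec_unfold. upd_ext.
Qed.

Lemma iter_exec_SInc2 r r' g k : r <> r' ->
  Nat.iter k (exec (SSeq (SInc r) (SInc r'))) g = upd (upd g r (g r + k)) r' (g r' + k).
Proof.
  intros H. induction k.
  - simpl. rewrite !Nat.add_0_r, !upd_same. auto.
  - rewrite Nat.iter_succ, IHk. exec_unfold. upd_ext.
Qed.

Definition Sadd a b t := SSeq (SFor a (SSeq (SInc b) (SInc t))) (SFor t (SInc a)).

Lemma Sadd_spec a b t g : a <> b -> b <> t -> a <> t -> g t = 0 ->
  exec (Sadd a b t) g = upd g b (g b + g a).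
Proof.
  intros. unfold Sadd. exec_unfold.
  rewrite iter_exec_SInc2, upd_neq, upd_eq, iter_exec_SInc by auto. upd_ext.
Qed.

Fixpoint Sconst r c := match c with 0 => SNop | S c => SSeq (SInc r) (Sconst r c) end.

Lemma Sconst_spec r c g : exec (Sconst r c) g = upd g r (g r + c).
Proof.
  revert g; induction c; intros g; simpl Sconst; exec_unfold.
  - rewrite Nat.add_0_r, upd_same; auto.
  - rewrite IHc. upd_ext.
Qed.

Definition Sclear r := SFor r SNop.

Lemma Sclear_spec r g : exec (Sclear r) g = upd g r 0.
Proof. unfold Sclear. exec_unfold. f_equal. induction (g r); simpl; auto. Qed.

Definition Smove a b := SFor a (SInc b).

Lemma Smove_spec a b g : a <> b -> exec (Smove a b) g = upd (upd g b (g b + g a)) a 0.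
Proof. intros H. unfold Smove. exec_unfold. rewrite iter_exec_SInc. upd_ext. Qed.

(* Cantor's pairing is [to_nat (x, y) = y + tri (x + y)], with [tri] the triangular numbers. *)
Definition tri k := nat_rec (fun _ => nat) 0 (fun i m => S i + m) k.

Lemma to_nat_tri x y : Cantor.to_nat (x, y) = y + tri (y + x).
Proof. reflexivity. Qed.

Lemma iter_tri o g k : o <> 5 -> o <> 6 -> g 6 = 0 -> g 5 = 0 ->
  Nat.iter k (exec (SSeq (SInc 5) (Sadd 5 o 6))) g = upd (upd g 5 k) o (g o + tri k).
Proof.
  intros. induction k.
  - simpl. upd_ext.
  - rewrite Nat.iter_succ, IHk. exec_unfold. rewrite Sadd_spec by upd_side.
    change (tri (S k)) with (S k + tri k). upd_ext.
Qed.

Definition Spair x y o :=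
  SSeq (Sadd x 4 6) (SSeq (Sadd y 4 6) (SSeq (SFor 4 (SSeq (SInc 5) (Sadd 5 o 6)))
    (SSeq (Sclear 5) (Sadd y o 6)))).

Lemma Spair_spec x y o g : x <> y -> x <> o -> y <> o ->
  x <> 4 -> x <> 5 -> x <> 6 -> y <> 4 -> y <> 5 -> y <> 6 -> o <> 4 -> o <> 5 -> o <> 6 ->
  g 4 = 0 -> g 5 = 0 -> g 6 = 0 ->
  exec (Spair x y o) g = upd g o (g o + Cantor.to_nat (g x, g y)).
Proof.
  intros. unfold Spair. exec_unfold.
  rewrite (Sadd_spec x 4 6), (Sadd_spec y 4 6), iter_tri, Sclear_spec, Sadd_spec by upd_side.
  rewrite to_nat_tri. upd_ext.
  all: try rewrite H11; rewrite ?Nat.add_0_l, (Nat.add_comm (g x) (g y)); lia.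
Qed.

Definition Sinstr (i : instr) : stmt :=
  match i with
  | Inc b => SSeq (Sconst 8 b) (SSeq (Spair 7 8 2) (Sclear 8))
  | JzDec r j =>
      SSeq (Sconst 7 r) (SSeq (Sconst 8 j) (SSeq (Spair 7 8 2) (SSeq (Sclear 7) (SSeq (Sclear 8)
        (SSeq (Sconst 7 1) (SSeq (Spair 7 2 8) (SSeq (Sclear 2) (SSeq (Sclear 7) (Smove 8 2)))))))))
  end.

Lemma Sinstr_spec i g : g 2 = 0 -> g 4 = 0 -> g 5 = 0 -> g 6 = 0 -> g 7 = 0 -> g 8 = 0 ->
  exec (Sinstr i) g = upd g 2 (encode_instr i).
Proof.
  intros. destruct i as [b|r j]; simpl Sinstr; exec_unfold.
  - rewrite Sconst_spec, Spair_spec, Sclear_spec by upd_side. unfold encode_instr. upd_ext.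
  - rewrite !Sconst_spec, (Spair_spec 7 8 2), !Sclear_spec, Spair_spec, Smove_spec by upd_side.
    unfold encode_instr. upd_ext.
Qed.

Definition cons_code (i : instr) (z : nat) : nat := S (Cantor.to_nat (encode_instr i, z)).

Lemma encode_app l rest :
  encode (l ++ rest) = fold_left (fun z i => cons_code i z) (rev l) (encode rest).
Proof.
  rewrite <- fold_left_rev_right, rev_involutive.
  induction l; simpl; auto. rewrite IHl. auto.
Qed.

Lemma encode_repeat i n rest : encode (repeat i n ++ rest) = Nat.iter n (cons_code i) (encode rest).
Proof. induction n; simpl; auto. rewrite IHn. auto. Qed.

Definition Spush (i : instr) : stmt :=
  SSeq (Sinstr i) (SSeq (Spair 2 1 3) (SSeq (Sclear 2) (SSeq (Sclear 1) (SSeq (SInc 1) (Smove 3 1))))).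

Fixpoint Spushes (l : list instr) : stmt :=
  match l with [] => SNop | i :: l => SSeq (Spush i) (Spushes l) end.

Definition scratch_clear (g : nat -> nat) : Prop :=
  g 2 = 0 /\ g 3 = 0 /\ g 4 = 0 /\ g 5 = 0 /\ g 6 = 0 /\ g 7 = 0 /\ g 8 = 0.

Lemma scratch_clear_upd1 g v : scratch_clear g -> scratch_clear (upd g 1 v).
Proof. unfold scratch_clear, upd; simpl; auto. Qed.

Lemma Spush_spec i g : scratch_clear g -> exec (Spush i) g = upd g 1 (cons_code i (g 1)).
Proof.
  intros (H2 & H3 & H4 & H5 & H6 & H7 & H8). unfold Spush; exec_unfold.
  rewrite Sinstr_spec, Spair_spec, !Sclear_spec, Smove_spec by upd_side.
  unfold cons_code. upd_ext.
Qed.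

Lemma Spushes_spec l g : scratch_clear g ->
  exec (Spushes l) g = upd g 1 (fold_left (fun z i => cons_code i z) l (g 1)).
Proof.
  revert g; induction l; intros g Hg; simpl Spushes; exec_unfold.
  - simpl. rewrite upd_same; auto.
  - rewrite Spush_spec, IHl, upd_upd, upd_eq by (try apply scratch_clear_upd1; auto). auto.
Qed.

Lemma iter_exec_Spush i g n : scratch_clear g ->
  Nat.iter n (exec (Spush i)) g = upd g 1 (Nat.iter n (cons_code i) (g 1)).
Proof.
  intros Hg. induction n.
  - simpl. rewrite upd_same; auto.
  - rewrite Nat.iter_succ, IHn, Spush_spec, upd_upd, upd_eq by (apply scratch_clear_upd1; auto). auto.
Qed.

(** * The programs enumerating the sets of fixed 2-adic valuation *)

Fixpoint val2_eq (n x : nat) : bool :=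
  match n with
  | 0 => Nat.odd x
  | S n => Nat.even x && negb (Nat.eqb x 0) && val2_eq n (Nat.div2 x)
  end.

(* Register 2 counts the halvings still to do.  Address 1 is the loop head, 2-5
   halve register 0 into register 4 (jumping to the trap 14 on odd input), 6-8
   move register 4 back, 9-11 test the final parity and 12-13 set the flag 3.
   The parameter [n] only enters through the [n] increments of register 2 at the
   end, which are run first (address 0 jumps there) and again before halting;
   [val_exit] goes back to the loop head, or halts once flag 3 is set. *)
Definition val_loop : program :=
  [ JzDec 9 15; JzDec 2 9; JzDec 0 6; JzDec 0 14; Inc 4; JzDec 9 2; JzDec 4 1; Inc 0; JzDec 9 6;
    JzDec 0 14; JzDec 0 12; JzDec 9 9; Inc 3; JzDec 9 15; JzDec 9 14 ].

Definition val_exit : instr := JzDec 3 1.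

Definition val_prog (n : nat) : program := val_loop ++ repeat (Inc 2) n ++ [val_exit].

Definition Sval_prog : stmt :=
  SSeq (Spush val_exit) (SSeq (SFor 0 (Spush (Inc 2))) (SSeq (Spushes (rev val_loop)) (Smove 1 0))).

Lemma Sval_prog_exec x : exec Sval_prog (regs (init x)) 0 = encode (val_prog x).
Proof.
  set (g := regs (init x)).
  assert (Hg : scratch_clear g) by (repeat split).
  unfold Sval_prog. exec_unfold.
  rewrite Spush_spec, iter_exec_Spush by (try apply scratch_clear_upd1; auto).
  rewrite Spushes_spec, Smove_spec by (try lia; repeat apply scratch_clear_upd1; exact Hg).
  unfold val_prog. rewrite encode_app, encode_repeat. reflexivity.
Qed.

Lemma val_prog_computable : computable (fun n => encode (val_prog n)).
Proof.
  exists (encode (compile Sval_prog 0)). intros x. rewrite <- Sval_prog_exec.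
  apply compile_computes. vm_compute. reflexivity.
Qed.

Lemma length_val_prog n : length (val_prog n) = 16 + n.
Proof. unfold val_prog. rewrite !length_app, repeat_length. simpl. lia. Qed.

Lemma nth_val_prog_tail n i : i < n -> nth_error (val_prog n) (15 + i) = Some (Inc 2).
Proof.
  intros H. unfold val_prog. rewrite nth_error_app2 by (simpl; lia).
  replace (15 + i - length val_loop) with i by (simpl; lia).
  rewrite nth_error_app1 by (rewrite repeat_length; auto). apply nth_error_repeat. auto.
Qed.

Lemma nth_val_prog_exit n : nth_error (val_prog n) (15 + n) = Some val_exit.
Proof.
  unfold val_prog. rewrite nth_error_app2 by (simpl; lia).
  replace (15 + n - length val_loop) with n by (simpl; lia).
  rewrite nth_error_app2 by (rewrite repeat_length; auto).
  rewrite repeat_length, Nat.sub_diag. reflexivity.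
Qed.

Definition looping (c : config) : Prop := pc c = 14 /\ regs c 9 = 0.

Ltac reg_value := unfold upd; simpl; lia.
Ltac run_Inc := apply reaches_step; erewrite step_Inc by reflexivity.
Ltac run_JzDec_0 := apply reaches_step; erewrite step_JzDec_0 by (reflexivity || reg_value).
Ltac run_JzDec_S v := apply reaches_step; erewrite (step_JzDec_S _ _ _ _ _ v) by (reflexivity || reg_value).

Lemma val_tail n j i g : i + j = n ->
  reaches (val_prog n) (mkConfig (15 + i) g) (eq (mkConfig (15 + n) (upd g 2 (g 2 + j)))).
Proof.
  revert i g; induction j; intros i g Hij.
  - apply reaches_now. rewrite Nat.add_0_r, upd_same. f_equal. lia.
  - apply reaches_step. rewrite (step_Inc _ _ _ _ (nth_val_prog_tail n i ltac:(lia))).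
    replace (S (15 + i)) with (15 + S i) by lia.
    eapply reaches_trans; [apply IHj; lia|]. intros c <-. apply reaches_now.
    rewrite upd_upd, upd_eq. do 2 f_equal. lia.
Qed.

Lemma val_start n x : reaches (val_prog n) (init x) (eq (mkConfig 1 (upd (regs (init x)) 2 n))).
Proof.
  unfold init. run_JzDec_0.
  eapply reaches_trans; [apply (val_tail n n 0); lia|]. intros c <-.
  apply reaches_step. rewrite (step_JzDec_0 _ _ _ _ _ (nth_val_prog_exit n)) by reflexivity.
  apply reaches_now. reflexivity.
Qed.

Lemma val_finish n g : g 3 = 0 -> g 9 = 0 -> reaches (val_prog n) (mkConfig 12 g) (halted (val_prog n)).
Proof.
  intros H3 H9. run_Inc. run_JzDec_0.
  eapply reaches_trans; [apply (val_tail n n 0); lia|]. intros c <-.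
  apply reaches_step. rewrite (step_JzDec_S _ _ _ _ _ 0 (nth_val_prog_exit n)) by reg_value.
  apply reaches_now. unfold halted. rewrite length_val_prog. simpl. lia.
Qed.

Lemma val_halve_even n m : forall a g, g 0 = 2 * m -> g 4 = a -> g 9 = 0 ->
  reaches (val_prog n) (mkConfig 2 g) (eq (mkConfig 6 (upd (upd g 0 0) 4 (a + m)))).
Proof.
  induction m; intros a g H0 H4 H9.
  - run_JzDec_0. apply reaches_now. f_equal. upd_ext.
  - run_JzDec_S (S (2 * m)). run_JzDec_S (2 * m). run_Inc. run_JzDec_0.
    eapply reaches_trans; [apply (IHm (S a)); reg_value|]. intros c <-.
    apply reaches_now. f_equal. upd_ext.
Qed.

Lemma val_halve_odd n m : forall g, g 0 = 2 * m + 1 -> g 9 = 0 ->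
  reaches (val_prog n) (mkConfig 2 g) looping.
Proof.
  induction m; intros g H0 H9.
  - run_JzDec_S 0. run_JzDec_0. apply reaches_now. split; auto.
  - run_JzDec_S (S (2 * m + 1)). run_JzDec_S (2 * m + 1). run_Inc. run_JzDec_0.
    apply IHm; reg_value.
Qed.

Lemma val_move_back n m : forall g, g 4 = m -> g 9 = 0 ->
  reaches (val_prog n) (mkConfig 6 g) (eq (mkConfig 1 (upd (upd g 0 (g 0 + m)) 4 0))).
Proof.
  induction m; intros g H4 H9.
  - run_JzDec_0. apply reaches_now. f_equal. upd_ext.
  - run_JzDec_S m. run_Inc. run_JzDec_0.
    eapply reaches_trans; [apply IHm; reg_value|]. intros c <-.
    apply reaches_now. f_equal. upd_ext.
Qed.

Lemma val_halve n m g : g 0 = 2 * m -> g 4 = 0 -> g 9 = 0 ->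
  reaches (val_prog n) (mkConfig 2 g) (eq (mkConfig 1 (upd g 0 m))).
Proof.
  intros H0 H4 H9.
  eapply reaches_trans; [apply (val_halve_even n m 0); auto|]. intros c <-.
  eapply reaches_trans; [apply (val_move_back n m); reg_value|]. intros c <-.
  apply reaches_now. f_equal. upd_ext.
Qed.

Lemma val_parity_even n m : forall g, g 0 = 2 * m -> g 9 = 0 ->
  reaches (val_prog n) (mkConfig 9 g) looping.
Proof.
  induction m; intros g H0 H9.
  - run_JzDec_0. apply reaches_now. split; auto.
  - run_JzDec_S (S (2 * m)). run_JzDec_S (2 * m). run_JzDec_0. apply IHm; reg_value.
Qed.

Lemma val_parity_odd n m : forall g, g 0 = 2 * m + 1 -> g 3 = 0 -> g 9 = 0 ->
  reaches (val_prog n) (mkConfig 9 g) (halted (val_prog n)).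
Proof.
  induction m; intros g H0 H3 H9.
  - run_JzDec_S 0. run_JzDec_0. apply val_finish; reg_value.
  - run_JzDec_S (S (2 * m + 1)). run_JzDec_S (2 * m + 1). run_JzDec_0. apply IHm; reg_value.
Qed.

Lemma val2_eq_0 n : val2_eq n 0 = false.
Proof. destruct n; reflexivity. Qed.

Lemma val2_eq_double n m : val2_eq (S n) (2 * m) = val2_eq n m.
Proof.
  cbn [val2_eq]. rewrite Nat.div2_double, Nat.even_mul.
  destruct m; [rewrite val2_eq_0 | ]; reflexivity.
Qed.

Lemma val2_eq_S_odd n m : val2_eq (S n) (2 * m + 1) = false.
Proof. cbn [val2_eq]. rewrite Nat.add_comm, Nat.even_add_mul_2. reflexivity. Qed.

Lemma val2_eq_0_double m : val2_eq 0 (2 * m) = false.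
Proof. cbn [val2_eq]. rewrite <- Nat.negb_even, Nat.even_mul. reflexivity. Qed.

Lemma val2_eq_0_odd m : val2_eq 0 (2 * m + 1) = true.
Proof. cbn [val2_eq]. rewrite Nat.add_comm, Nat.odd_add_mul_2. reflexivity. Qed.

Lemma val2_eq_mul n k : val2_eq n (2 ^ n * (2 * k + 1)) = true.
Proof.
  induction n.
  - rewrite Nat.pow_0_r, Nat.mul_1_l. apply val2_eq_0_odd.
  - rewrite Nat.pow_succ_r', <- Nat.mul_assoc, val2_eq_double. exact IHn.
Qed.

Lemma val2_eq_unique n n' x : val2_eq n x = true -> val2_eq n' x = true -> n = n'.
Proof.
  revert n' x; induction n; intros [|n'] x H H'; auto; destruct (Nat.Even_or_Odd x) as [[m ->]|[m ->]].
  - rewrite val2_eq_0_double in H. discriminate.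
  - rewrite val2_eq_S_odd in H'. discriminate.
  - rewrite val2_eq_0_double in H'. discriminate.
  - rewrite val2_eq_S_odd in H. discriminate.
  - rewrite val2_eq_double in H, H'. f_equal. eauto.
  - rewrite val2_eq_S_odd in H. discriminate.
Qed.

Lemma val_loop_outcome n c : forall g, g 2 = c -> g 3 = 0 -> g 4 = 0 -> g 9 = 0 ->
  reaches (val_prog n) (mkConfig 1 g)
    (fun d => if val2_eq c (g 0) then halted (val_prog n) d else looping d).
Proof.
  induction c; intros g H2 H3 H4 H9; destruct (Nat.Even_or_Odd (g 0)) as [[m Hm]|[m Hm]];
    rewrite Hm.
  - rewrite val2_eq_0_double. run_JzDec_0. apply (val_parity_even n m); auto.
  - rewrite val2_eq_0_odd. run_JzDec_0. apply (val_parity_odd n m); auto.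
  - rewrite val2_eq_double. run_JzDec_S c.
    eapply reaches_trans; [apply (val_halve n m); reg_value|]. intros d <-.
    pose proof (IHc (upd (upd g 2 c) 0 m)) as IH. rewrite upd_eq in IH. apply IH; reg_value.
  - rewrite val2_eq_S_odd. run_JzDec_S c. apply (val_halve_odd n m); reg_value.
Qed.

Lemma looping_forever n c k : looping c -> run (val_prog n) k c = c.
Proof.
  intros [H14 H9]. induction k; auto. simpl.
  destruct c as [p g]. simpl in H14, H9. subst p.
  rewrite (step_JzDec_0 _ _ _ _ _ (eq_refl : nth_error (val_prog n) 14 = Some (JzDec 9 14)) H9).
  exact IHk.
Qed.

Lemma val_prog_halts n x : halts (encode (val_prog n)) x <-> val2_eq n x = true.
Proof.
  unfold halts. rewrite prog_of_encode.
  assert (Houtcome : reaches (val_prog n) (init x)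
            (fun d => if val2_eq n x then halted (val_prog n) d else looping d)).
  { eapply reaches_trans; [apply val_start|]. intros c <-.
    apply (val_loop_outcome n n); reflexivity. }
  destruct (val2_eq n x); split; intros H; auto; try discriminate.
  exfalso. destruct H as [N HN]. destruct Houtcome as [K HK].
  assert (Hnot : ~ halted (val_prog n) (run (val_prog n) K (init x))).
  { unfold halted. destruct HK as [-> _]. rewrite length_val_prog. lia. }
  apply Hnot. destruct (le_lt_dec N K).
  - replace K with (N + (K - N)) by lia. rewrite run_add, run_halted; auto.
  - replace N with (K + (N - K)) in HN by lia. rewrite run_add, looping_forever in HN; auto.
Qed.

(** * Sets of upper density 1 are not strongly hyperhyperimmune *)

Lemma count_below_blocks X i K :
  (forall k, X (2 ^ i * (2 * k + 1)) = true) -> K <= count_below X (2 ^ S i * K).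
Proof.
  intros HX. induction K; [lia|].
  pose proof (Nat.pow_nonzero 2 i).
  assert (Hlt : count_below X (2 ^ i * (2 * K + 1)) < count_below X (2 ^ S i * S K)).
  { apply count_below_gt; auto. rewrite Nat.pow_succ_r'. nia. }
  pose proof (count_below_mono X (2 ^ S i * K) (2 ^ i * (2 * K + 1))).
  rewrite Nat.pow_succ_r' in *. nia.
Qed.

Lemma upper_density_eq_1_io A eps : upper_density A = Finite 1 -> (0 < eps)%R ->
  forall L, exists N, L <= N /\ 0 < N /\ ((1 - eps) * INR N < INR (count_below A N))%R.
Proof.
  unfold upper_density. intros Hd Heps L.
  destruct (ex_LimSup_seq (fun n => rho A (S n))) as [l Hl].
  rewrite (is_LimSup_seq_unique _ _ Hl) in Hd. subst l.
  destruct (Hl (mkposreal _ Heps)) as [Hio _]. destruct (Hio L) as [n [Hn Hrho]]. simpl in Hrho.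
  exists (S n). split; [lia | split; [lia|]].
  unfold rho in Hrho. assert (HN : (0 < INR (S n))%R) by (apply lt_0_INR; lia).
  apply (Rmult_lt_compat_r (INR (S n))) in Hrho; auto.
  unfold Rdiv in Hrho. rewrite Rmult_assoc, Rinv_l, Rmult_1_r in Hrho; lra.
Qed.

Lemma upper_density_ne_1 A P : 0 < P ->
  (forall K, K <= count_below (fun x => negb (A x)) (P * K)) -> upper_density A <> Finite 1.
Proof.
  intros HP Hcompl Hd.
  assert (HPr : (0 < INR P)%R) by (apply lt_0_INR; lia).
  destruct (upper_density_eq_1_io A (/ (4 * INR P)) Hd ltac:(apply Rinv_0_lt_compat; lra) (2 * P))
    as [N [HN [HN0 Hcount]]].
  pose proof (count_below_negb A N) as Hsum.
  set (b := count_below (fun x => negb (A x)) N) in Hsum.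
  assert (Hb : 4 * P * b < N).
  { apply INR_lt. rewrite !mult_INR. replace (INR 4) with 4%R by (simpl; lra).
    apply (f_equal INR) in Hsum. rewrite plus_INR in Hsum.
    assert (Hsmall : (INR b < INR N * / (4 * INR P))%R) by lra.
    apply (Rmult_lt_compat_r (4 * INR P)) in Hsmall; [|lra].
    rewrite Rmult_assoc, Rinv_l, Rmult_1_r in Hsmall; lra. }
  set (K := N / P).
  assert (HK : P * K <= N) by apply Nat.Div0.mul_div_le.
  assert (HK' : N < P * (K + 1)).
  { pose proof (Nat.div_mod N P ltac:(lia)). pose proof (Nat.mod_upper_bound N P ltac:(lia)). nia. }
  pose proof (Hcompl K) as HKcount.
  pose proof (count_below_mono (fun x => negb (A x)) _ _ HK) as Hmono. fold b in Hmono. nia.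
Qed.

Lemma not_strongly_hhi_of_upper_density_1 A : strongly_hhi A -> upper_density A <> Finite 1.
Proof.
  intros [_ Hno] Hd. apply Hno. exists (fun n => encode (val_prog n)).
  split; [apply val_prog_computable | split].
  - intros i j x Hij Hi Hj. apply val_prog_halts in Hi, Hj. eauto using val2_eq_unique.
  - intros i. apply NNPP. intros Hmiss.
    apply (upper_density_ne_1 A (2 ^ S i)); auto.
    + apply Nat.neq_0_lt_0, Nat.pow_nonzero. lia.
    + intros K. apply count_below_blocks. intros k.
      destruct (A (2 ^ i * (2 * k + 1))) eqn:E; auto. exfalso. apply Hmiss.
      eexists. split; eauto. apply val_prog_halts, val2_eq_mul.
Qed.

Open Scope R_scope.

Theorem mainTheorem20 :
  (forall A : nat -> bool, strongly_hhi A -> upper_density A <> Finite 1) /\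
  (forall eps : R, 0 < eps ->
     exists A : nat -> bool,
       strongly_hhi A /\ Rbar_le (Finite (1 - eps)) (upper_density A)).
Proof. split; [apply not_strongly_hhi_of_upper_density_1 | apply strongly_hhi_dense]. Qed.
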